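(* Let $p,p',p''\geq 5$ be three distinct primes. Then the set of integers $x$ such that for each $q\in\{p,p',p''\}$ there is an odd integer $k_q$ with $x=k_qq+4N(q/6)$ or $x=k_qq-4N(q/6)$ (the triple non-ranks of $p,p',p''$) is the union of exactly $2^3=8$ pairwise distinct arithmetic progressions (residue classes) with common difference $2pp'p''$.
   Context: $N(x)$ denotes the integer nearest to the real number $x$. *)

From mathcomp Require Import all_boot all_order all_algebra.
Set Implicit Arguments. Unset Strict Implicit. Unset Printing Implicit Defensive.
Import Order.TTheory GRing.Theory Num.Theory.
Local Open Scope ring_scope.

(* N(x): the integer nearest to the rational x (ties rounded up; ties never
   occur for x = q/6 with q a prime >= 5). *)
Definition nearest (x : rat) : int := Num.floor (x + 1 / 2).

Definition nonrank (q : nat) (x : int) : Prop :=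
  exists k : int, ~~ (2 %| k)%Z /\
    (x = k * q%:Z + 4 * nearest (q%:Q / 6) \/ x = k * q%:Z - 4 * nearest (q%:Q / 6)).

Definition triple_nonrank (p p' p'' : nat) (x : int) : Prop :=
  nonrank p x /\ nonrank p' x /\ nonrank p'' x.

From mathcomp Require Import all_boot all_order all_algebra.
From mathcomp Require Import zify ring lra.
Set Implicit Arguments. Unset Strict Implicit. Unset Printing Implicit Defensive.
Import Order.TTheory GRing.Theory Num.Theory.
Local Open Scope ring_scope.

(* For odd q > 1, x is a non-rank of q exactly when x is odd and
   x = +-4N(q/6) (mod q); the two signs give distinct classes because
   0 < N(q/6) < q and q is odd.  Since 2, p, p', p'' are pairwise coprime,
   the Chinese remainder theorem turns the 2^3 sign choices into 8 distinct
   residue classes modulo 2pp'p''. *)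

Definition nonrank_residue (q : nat) (b : bool) : int :=
  if b then 4 * nearest (q%:Q / 6) else - (4 * nearest (q%:Q / 6)).

Section NonRanksOfOneModulus.

Variable q : nat.
Hypothesis q_odd : odd q.

Lemma nonrankE (x : int) :
  nonrank q x <->
  (x == 1 %[mod 2])%Z /\ exists b, (x == nonrank_residue q b %[mod q%:Z])%Z.
Proof.
have q_mod2 : (q %% 2 = 1)%N by rewrite modn2 q_odd.
rewrite /nonrank /nonrank_residue; set c := nearest _; split.
  move=> [k [k_odd x_eq]].
  split; first by rewrite eqz_mod_dvd; case: x_eq => ->; lia.
  by case: x_eq => ->; [exists true | exists false];
    rewrite eqz_mod_dvd; apply/dvdzP; exists k; ring.
move=> [x_odd [b]]; rewrite eqz_mod_dvd => /dvdzP [m x_eq].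
move: x_odd; rewrite eqz_mod_dvd => x_odd.
exists m; split; first by case: b x_eq => /= x_eq; lia.
by case: b x_eq => /= x_eq; [left | right]; rewrite -x_eq; ring.
Qed.

Hypothesis q_gt1 : (1 < q)%N.

Lemma nearest_bounds : 1 <= nearest (q%:Q / 6) < q%:Z.
Proof.
have q_ge3 : (3 <= q)%N by case: q q_odd q_gt1 => [|[|[|]]].
have q_ge3Q : (3 : rat) <= q%:Q by rewrite (ler_nat rat 3 q).
by rewrite /nearest floor_ge_int floor_lt_int /=; apply/andP; split; lra.
Qed.

Lemma nonrank_residue_inj (b1 b2 : bool) :
  (nonrank_residue q b1 == nonrank_residue q b2 %[mod q%:Z])%Z -> b1 = b2.
Proof.
have /andP [c_gt0 c_ltq] := nearest_bounds.
have q_cop8 : coprimez q%:Z 8.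
  by rewrite coprimezE /= (@coprime_pexpr 3 q 2 isT) coprimen2 q_odd.
have q_ndvd_8c : ~ (q%:Z %| 8 * nearest (q%:Q / 6))%Z.
  rewrite Gauss_dvdzr // => /dvdzP [m c_eq].
  have [m_le0 | m_ge1] : m <= 0 \/ 1 <= m by lia.
  - have : m * q%:Z <= 0 by rewrite pmulr_lle0 //; lia.
    lia.
  - have : q%:Z <= m * q%:Z by rewrite ler_peMl //; lia.
    lia.
rewrite /nonrank_residue eqz_mod_dvd.
case: b1; case: b2 => //= /dvdzP [m c_eq]; exfalso; apply/q_ndvd_8c/dvdzP.
- by exists m; rewrite -c_eq; ring.
- by exists (- m); rewrite mulNr -c_eq; ring.
Qed.

End NonRanksOfOneModulus.

Lemma eqz_mod_zchinese (m1 m2 a1 a2 x : int) : coprimez m1 m2 ->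
  (x == zchinese m1 m2 a1 a2 %[mod m1 * m2])%Z =
  (x == a1 %[mod m1])%Z && (x == a2 %[mod m2])%Z.
Proof. by move=> co; rewrite zchinese_remainder // zchinese_modl // zchinese_modr. Qed.

Section TripleNonRanks.

Variables p p' p'' : nat.
Hypotheses (p_odd : odd p) (p'_odd : odd p') (p''_odd : odd p'').
Hypotheses (p_gt1 : (1 < p)%N) (p'_gt1 : (1 < p')%N) (p''_gt1 : (1 < p'')%N).
Hypotheses (co_pp' : coprime p p') (co_pp'' : coprime p p'') (co_p'p'' : coprime p' p'').

Definition triple_nonrank_class (b : bool * bool * bool) : int :=
  zchinese 2 (p * p' * p'')%N%:Z 1
    (zchinese (p * p')%N%:Z p''%:Z
       (zchinese p%:Z p'%:Z (nonrank_residue p b.1.1) (nonrank_residue p' b.1.2))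
       (nonrank_residue p'' b.2)).

Lemma eqz_mod_triple_nonrank_class (b : bool * bool * bool) (x : int) :
  (x == triple_nonrank_class b %[mod 2 * (p * p' * p'')%N%:Z])%Z =
  [&& (x == 1 %[mod 2])%Z, (x == nonrank_residue p b.1.1 %[mod p%:Z])%Z,
      (x == nonrank_residue p' b.1.2 %[mod p'%:Z])%Z
    & (x == nonrank_residue p'' b.2 %[mod p''%:Z])%Z].
Proof.
rewrite eqz_mod_zchinese; last by rewrite coprimezE /= coprime2n !oddM p_odd p'_odd.
rewrite PoszM eqz_mod_zchinese; last by rewrite coprimezE /= coprimeMl co_pp''.
by rewrite PoszM eqz_mod_zchinese ?coprimezE // -!andbA.
Qed.

Lemma triple_nonrankE (x : int) :
  triple_nonrank p p' p'' x <->
  exists b, (x == triple_nonrank_class b %[mod 2 * (p * p' * p'')%N%:Z])%Z.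
Proof.
split.
  move=> [/(nonrankE p_odd) [x_odd [b1 x_b1]]].
  move=> [/(nonrankE p'_odd) [_ [b2 x_b2]] /(nonrankE p''_odd) [_ [b3 x_b3]]].
  by exists (b1, b2, b3); rewrite eqz_mod_triple_nonrank_class; apply/and4P.
move=> [b]; rewrite eqz_mod_triple_nonrank_class => /and4P [x_odd x_b1 x_b2 x_b3].
split; [|split].
- by apply/(nonrankE p_odd); split=> //; exists b.1.1.
- by apply/(nonrankE p'_odd); split=> //; exists b.1.2.
- by apply/(nonrankE p''_odd); split=> //; exists b.2.
Qed.

Lemma triple_nonrank_class_inj (b b' : bool * bool * bool) :
  (triple_nonrank_class b == triple_nonrank_class b' %[mod 2 * (p * p' * p'')%N%:Z])%Z ->
  b = b'.
Proof.
have := eqz_mod_triple_nonrank_class b (triple_nonrank_class b).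
rewrite eqxx => /esym/and4P [_ /eqP r1 /eqP r2 /eqP r3].
rewrite eqz_mod_triple_nonrank_class r1 r2 r3 => /and4P [_ e1 e2 e3].
move: b b' {r1 r2 r3} e1 e2 e3 => [[b1 b2] b3] [[b1' b2'] b3'] /=.
move=> /(nonrank_residue_inj p_odd p_gt1) -> /(nonrank_residue_inj p'_odd p'_gt1) ->.
by move=> /(nonrank_residue_inj p''_odd p''_gt1) ->.
Qed.

End TripleNonRanks.

Lemma ord8_bool3_bij : exists f : 'I_8 -> bool * bool * bool, bijective f.
Proof.
have card8 : #|{: bool * bool * bool}| = 8 by rewrite !card_prod card_bool.
exists (fun i => enum_val (cast_ord (esym card8) i)).
exists (fun b => cast_ord card8 (enum_rank b)) => [i | b] /=.
  by rewrite enum_valK cast_ordKV.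
by rewrite cast_ordK enum_rankK.
Qed.

Theorem theorem3p11 (p p' p'' : nat) :
  prime p -> prime p' -> prime p'' ->
  (5 <= p)%N -> (5 <= p')%N -> (5 <= p'')%N ->
  p != p' -> p != p'' -> p' != p'' ->
  exists r : 'I_8 -> int,
    (forall i j : 'I_8, (r i == r j %[mod (2 * (p * p' * p'')%N%:Z)])%Z -> i = j) /\
    (forall x : int, triple_nonrank p p' p'' x <->
       exists i : 'I_8, (x == r i %[mod (2 * (p * p' * p'')%N%:Z)])%Z).
Proof.
move=> pr_p pr_p' pr_p'' p_ge5 p'_ge5 p''_ge5 pp' pp'' p'p''.
have prime_ge5_odd q : prime q -> (5 <= q)%N -> odd q by case/even_prime=> [->|].
have [p_odd p'_odd p''_odd] := And3 (prime_ge5_odd p pr_p p_ge5)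
  (prime_ge5_odd p' pr_p' p'_ge5) (prime_ge5_odd p'' pr_p'' p''_ge5).
have [p_gt1 p'_gt1 p''_gt1] := And3 (prime_gt1 pr_p) (prime_gt1 pr_p') (prime_gt1 pr_p'').
have coprime_neq q q' : prime q -> prime q' -> q != q' -> coprime q q'.
  by move=> pr_q pr_q' qq'; rewrite prime_coprime // dvdn_prime2.
have co_pp' := coprime_neq p p' pr_p pr_p' pp'.
have co_pp'' := coprime_neq p p'' pr_p pr_p'' pp''.
have co_p'p'' := coprime_neq p' p'' pr_p' pr_p'' p'p''.
have [f [g fK gK]] := ord8_bool3_bij.
exists (fun i => triple_nonrank_class p p' p'' (f i)); split.
  move=> i j /(triple_nonrank_class_inj p_odd p'_odd p''_odd p_gt1 p'_gt1 p''_gt1).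
  by move=> /(_ co_pp' co_pp'' co_p'p''); exact: (can_inj fK).
move=> x; rewrite (triple_nonrankE p_odd p'_odd p''_odd co_pp' co_pp'' co_p'p'').
split=> [[b x_b] | [i x_i]]; last by exists (f i).
by exists (g b); rewrite gK.
Qed.
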